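(* In the setting below, consider any maximal collection of pairwise disjoint $(\ell+1)$-cycles in $X_1\times\dots\times X_\ell\times Y$ (i.e. tuples $(x_1,\dots,x_\ell,y)$ with $x_i\in X_i$, $y\in Y$, $x_1+\dots+x_\ell+y=0$, pairwise differing in every coordinate), and let $t$ be its size. Then $t\geq\frac{r}{2k\theta}N$.
   Context: Let $p$ be a fixed prime, $n\geq1$, $N=p^n$, $[m]=\{1,\dots,m\}$. For sets $X_1,\dots,X_k\subseteq\mathbb{F}_p^n$, a $k$-cycle is a tuple $(x_1,\dots,x_k)\in X_1\times\dots\times X_k$ with $x_1+\dots+x_k=0$; two cycles are disjoint if they differ in every coordinate. Setting: $k\geq4$, $X_1,\dots,X_k\subseteq\mathbb{F}_p^n$, the number of $k$-cycles in $X_1\times\dots\times X_k$ equals $\delta'N^{k-1}$ with $\delta'>0$, and $\theta\geq 1$ is such that for each $i\in[k]$ every point of $X_i$ occurs as $x_i$ in at most $\theta\delta'N^{k-2}$ $k$-cycles. Put $\alpha=(\theta\delta')^{1/(k-2)}$. For $I\subseteq[k]$ with $1\leq|I|\leq k-2$, an $I$-tuple $(x_i)_{i\in I}\in\prod_{i\in I}X_i$ is bad if at least $2\alpha^{k-|I|-1}N^{k-|I|-1}$ $k$-cycles in $X_1\times\dots\times X_k$ have their $I$-coordinates equal to it. Let $2\leq\ell\leq k-2$ and $0<r<1$. Let $M$ be a collection of $k$-cycles with $|M|\geq r\delta'N^{k-1}$ such that (i) every $(x_1,\dots,x_\ell)\in X_1\times\dots\times X_\ell$ extends to at most $2\alpha^{k-\ell-1}N^{k-\ell-1}$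 $k$-cycles in $M$, and (ii) for every $(x_1,\dots,x_k)\in M$ the $\{\ell+1,\dots,k\}$-tuple $(x_{\ell+1},\dots,x_k)$ is not bad. Let $Y$ be the set of $y\in\mathbb{F}_p^n$ such that the equation $x_1+\dots+x_\ell=-y$ has at most $2\alpha^{\ell-1}N^{\ell-1}$ solutions $(x_1,\dots,x_\ell)\in X_1\times\dots\times X_\ell$. *)

From HB Require Import structures.
From mathcomp Require Import all_boot all_order all_algebra.
Set Implicit Arguments. Unset Strict Implicit. Unset Printing Implicit Defensive.
Import Order.TTheory GRing.Theory Num.Theory.
Local Open Scope ring_scope.

Notation Vp p n := 'rV['F_p]_n.

(* Families of sets are indexed by nat, 0-based: X 0, ..., X (m-1) play the
   role of X_1, ..., X_m. *)

Definition cycles (V : finZmodType) (m : nat) (X : nat -> {set V})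
  : {set {ffun 'I_m -> V}} :=
  [set x : {ffun 'I_m -> V} | [forall i : 'I_m, x i \in X (nat_of_ord i)]
                              && (\sum_(i < m) x i == 0)].

Definition disjoint_cycles (V : finType) (m : nat) (x y : {ffun 'I_m -> V}) :=
  forall i : 'I_m, x i != y i.

Definition pairwise_disjoint (V : finType) (m : nat) (T : {set {ffun 'I_m -> V}}) :=
  forall x y, x \in T -> y \in T -> x != y -> disjoint_cycles x y.

Definition maximal_disjoint (V : finType) (m : nat)
  (C T : {set {ffun 'I_m -> V}}) :=
  [/\ T \subset C, pairwise_disjoint T &
      forall T' : {set {ffun 'I_m -> V}},
        T \subset T' -> T' \subset C -> pairwise_disjoint T' -> T' = T].

Definition n_ext (V : finZmodType) (k : nat) (X : nat -> {set V})
  (I : {set 'I_k}) (y : {ffun 'I_k -> V}) : nat :=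
  #|[set x in cycles k X | [forall i in I, x i == y i]]|.

(* The I-tuple (y_i)_{i in I} (represented by y, only coordinates in I
   matter) is bad: it lies in prod_{i in I} X_i and at least
   2 alpha^(k-|I|-1) N^(k-|I|-1) k-cycles extend it. *)
Definition bad (R : numDomainType) (V : finZmodType) (k : nat)
  (X : nat -> {set V}) (alpha : R) (N : nat)
  (I : {set 'I_k}) (y : {ffun 'I_k -> V}) : bool :=
  [forall i in I, y i \in X (nat_of_ord i)] &&
  (2 * alpha ^+ (k - #|I| - 1) * (N%:R) ^+ (k - #|I| - 1) <= (n_ext X I y)%:R).

Definition Yset (R : numDomainType) (V : finZmodType) (l : nat)
  (X : nat -> {set V}) (alpha : R) (N : nat) : {set V} :=
  [set y : V | (#|[set x : {ffun 'I_l -> V} |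
                    [forall i : 'I_l, x i \in X (nat_of_ord i)]
                    && (\sum_(i < l) x i == - y)]|%:R
                <= 2 * alpha ^+ (l - 1) * (N%:R) ^+ (l - 1))].

Definition famXY (V : finType) (l : nat) (X : nat -> {set V}) (Y : {set V})
  : nat -> {set V} :=
  fun i => if (i < l)%N then X i else Y.

(* Collapse every cycle x of M to the (l+1)-cycle
   (x_1, ..., x_l, x_(l+1) + ... + x_k); since the tail of x is not bad, the
   last coordinate lies in Y.  By maximality of T each collapsed cycle shares a
   coordinate with some z in T.  A value z_i with i <= l is the i-th coordinate
   of at most theta delta' N^(k-2) cycles, while the last value z_(l+1) = y is
   reached by at most (#solutions of x_1 + ... + x_l = -y) times (#extensions of
   an l-prefix in M) <= 4 theta delta' N^(k-2) cycles of M.  Hence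
   r delta' N^(k-1) <= |M| <= |T| (l + 4) theta delta' N^(k-2), and l + 4 <= 2k. *)

From HB Require Import structures.
From mathcomp Require Import all_boot all_order all_algebra.
From mathcomp Require Import zify ring.
Import Order.TTheory GRing.Theory Num.Theory.
Set Implicit Arguments. Unset Strict Implicit. Unset Printing Implicit Defensive.

Lemma leq_card_sum_fibres (A B : finType) (S : {set A}) (Q : {set B})
    (rel : A -> B -> bool) :
  {in S, forall x, exists2 b, b \in Q & rel x b} ->
  (#|S| <= \sum_(b in Q) #|[set x in S | rel x b]|)%N.
Proof.
move=> cover.
have fibreE b : #|[set x in S | rel x b]| = \sum_(x in S) (rel x b : nat).
  rewrite -sum1_card (eq_bigl (fun x => (x \in S) && rel x b)) => [|x]; last by rewrite inE.
  by rewrite big_mkcondr; apply: eq_bigr => x _; case: (rel x b).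
under eq_bigr do rewrite fibreE.
rewrite exchange_big -sum1_card /=; apply: leq_sum => x xS.
have [b bQ xb] := cover x xS.
by rewrite (bigD1 b) //= xb.
Qed.

Local Open Scope ring_scope.

Lemma card_le_sum_fibre_bounds (R : numDomainType) (A B : finType) (S : {set A})
    (Q : {set B}) (rel : A -> B -> bool) (c : B -> R) :
  {in S, forall x, exists2 b, b \in Q & rel x b} ->
  {in Q, forall b, #|[set x in S | rel x b]|%:R <= c b} ->
  #|S|%:R <= \sum_(b in Q) c b.
Proof.
move=> cover fibre; apply: le_trans (ler_sum _ fibre).
by rewrite -natr_sum ler_nat leq_card_sum_fibres.
Qed.

Definition share_coord (V : eqType) (m : nat) (u v : {ffun 'I_m -> V}) :=
  [exists j, u j == v j].

(* For m = 0 the empty tuple is disjoint from itself, hence the m.+1. *)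
Lemma maximal_disjoint_share (V : finType) (m : nat)
    (C T : {set {ffun 'I_m.+1 -> V}}) (u : {ffun 'I_m.+1 -> V}) :
  maximal_disjoint C T -> u \in C -> exists2 z, z \in T & share_coord u z.
Proof.
case=> TC Tdisj Tmax uC; apply/exists_inP; apply: contraT => no_share.
have u_disj z : z \in T -> disjoint_cycles u z.
  move=> zT j; apply: contra no_share => /eqP uz.
  by apply/exists_inP; exists z => //; apply/existsP; exists j; rewrite uz.
have uT : u \in T.
  rewrite -(Tmax (u |: T)) ?setU11 ?subsetUr //.
    by apply/subsetP => v /setU1P[-> // | /(subsetP TC)].
  move=> v w /setU1P[-> | vT] /setU1P[-> | wT] vw; first by rewrite eqxx in vw.
  - exact: u_disj.
  - by move=> j; rewrite eq_sym; apply: u_disj.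
  - exact: Tdisj.
by have := u_disj u uT ord0; rewrite eqxx.
Qed.

Definition solutions (V : finZmodType) (l : nat) (X : nat -> {set V}) (v : V)
  : {set {ffun 'I_l -> V}} :=
  [set a : {ffun 'I_l -> V} | [forall i : 'I_l, a i \in X i] && (\sum_(i < l) a i == v)].

Lemma in_Yset (R : numDomainType) (V : finZmodType) (l : nat) (X : nat -> {set V})
    (alpha : R) (N : nat) (y : V) :
  (y \in Yset l X alpha N) =
  (#|solutions l X (- y)|%:R <= 2 * alpha ^+ (l - 1) * N%:R ^+ (l - 1)).
Proof. by rewrite inE. Qed.

Lemma card_tail_ord (k l : nat) : #|[set i : 'I_k | (l <= i)%N]| = (k - l)%N.
Proof.
rewrite -[RHS]muln1 -sum_nat_const_nat (big_geq_mkord l k xpredT) -sum1_card.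
by apply: eq_bigl => i; rewrite inE.
Qed.

Lemma famXY_cycle_coords (V : finZmodType) (l : nat) (X : nat -> {set V})
    (Y : {set V}) (z : {ffun 'I_l.+1 -> V}) :
  z \in cycles l.+1 (famXY l X Y) ->
  (forall i : 'I_l, z (widen_ord (leqnSn l) i) \in X i) /\ z ord_max \in Y.
Proof.
rewrite inE => /andP[/forallP zC _]; split.
  by move=> i; have := zC (widen_ord (leqnSn l) i); rewrite /famXY /= ltn_ord.
by have := zC ord_max; rewrite /famXY /= ltnn.
Qed.

Lemma ler_mul_pow_bounds (R : numDomainType) (x y S : R) (a b : nat) :
  0 <= x -> 0 <= y -> S <= 2 * x ^+ a * y ^+ a ->
  S * (2 * x ^+ b * y ^+ b) <= 4 * (x ^+ (a + b) * y ^+ (a + b)).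
Proof.
move=> x0 y0 hS; apply: le_trans (ler_wpM2r _ hS) _; first by rewrite !mulr_ge0 ?exprn_ge0.
by rewrite !exprD [leRHS](_ : _ = 2 * x ^+ a * y ^+ a * (2 * x ^+ b * y ^+ b)) //; ring.
Qed.

Section Contraction.

Variables (V : finZmodType) (k l : nat).
Hypothesis lk : (l <= k)%N.
Implicit Types (x y : {ffun 'I_k -> V}) (a : {ffun 'I_l -> V}).

Definition prefix (x : {ffun 'I_k -> V}) : {ffun 'I_l -> V} :=
  [ffun i => x (widen_ord lk i)].

Definition tail_sum (x : {ffun 'I_k -> V}) : V := \sum_(i < k | (l <= i)%N) x i.

Definition contract (x : {ffun 'I_k -> V}) : {ffun 'I_l.+1 -> V} :=
  [ffun j : 'I_l.+1 => if insub (val j) is Some i then prefix x i else tail_sum x].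

Definition splice (a : {ffun 'I_l -> V}) (x : {ffun 'I_k -> V}) : {ffun 'I_k -> V} :=
  [ffun i : 'I_k => if insub (val i) is Some j then a j else x i].

Lemma contract_widen x (i : 'I_l) : contract x (widen_ord (leqnSn l) i) = prefix x i.
Proof. by rewrite ffunE /= valK. Qed.

Lemma contract_max x : contract x ord_max = tail_sum x.
Proof. by rewrite ffunE /= insubF ?ltnn. Qed.

Lemma splice_head a x (i : 'I_k) (il : (i < l)%N) : splice a x i = a (Ordinal il).
Proof. by rewrite ffunE insubT. Qed.

Lemma splice_tail a x (i : 'I_k) : (l <= i)%N -> splice a x i = x i.
Proof. by move=> li; rewrite ffunE insubF // ltnNge li. Qed.

Lemma splice_prefix x y (i : 'I_k) : (i < l)%N -> splice (prefix x) y i = x i.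
Proof. by move=> il; rewrite splice_head ffunE; congr (x _); apply: val_inj. Qed.

Lemma prefix_splice a x : prefix (splice a x) = a.
Proof. by apply/ffunP => i; rewrite !ffunE /= valK. Qed.

Lemma tail_sum_splice a x : tail_sum (splice a x) = tail_sum x.
Proof. by apply: eq_bigr => i; apply: splice_tail. Qed.

Lemma sum_prefix_tail x : \sum_(i < k) x i = \sum_(i < l) prefix x i + tail_sum x.
Proof.
rewrite (bigID (fun i : 'I_k => (i < l)%N)) /= (big_ord_narrow lk).
congr (_ + _); first by apply: eq_bigr => i _; rewrite ffunE.
by apply: eq_bigl => i; rewrite -leqNgt.
Qed.

Variable X : nat -> {set V}.

Lemma prefix_in_solutions x :
  x \in cycles k X -> prefix x \in solutions l X (- tail_sum x).
Proof.
rewrite !inE => /andP[/forallP xX /eqP x0]; apply/andP; split.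
  by apply/forallP => i; rewrite ffunE; apply: xX.
by rewrite -addr_eq0 -sum_prefix_tail x0.
Qed.

Lemma splice_in_cycles a x : x \in cycles k X ->
  a \in solutions l X (- tail_sum x) -> splice a x \in cycles k X.
Proof.
rewrite !inE => /andP[/forallP xX _] /andP[/forallP aX /eqP a_sum].
apply/andP; split.
  apply/forallP => i; case: (ltnP i l) => [il | li].
    by rewrite splice_head; apply: aX.
  by rewrite splice_tail //; apply: xX.
by rewrite sum_prefix_tail prefix_splice tail_sum_splice a_sum addNr.
Qed.

Lemma contract_in_cycles (Y : {set V}) x : x \in cycles k X -> tail_sum x \in Y ->
  contract x \in cycles l.+1 (famXY l X Y).
Proof.
move=> /prefix_in_solutions; rewrite !inE /famXY => /andP[/forallP xX /eqP x_sum] xY.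
apply/andP; split.
  apply/forallP => j; rewrite ffunE; case: insubP => [i _ <- | /negbTE->] //.
  by rewrite ltn_ord.
rewrite big_ord_recr /= contract_max.
under eq_bigr do rewrite contract_widen.
by rewrite x_sum addNr.
Qed.

Lemma card_solutions_le_n_ext x : x \in cycles k X ->
  (#|solutions l X (- tail_sum x)| <= n_ext X [set i : 'I_k | (l <= i)%N] x)%N.
Proof.
move=> xC; have splice_inj : injective (splice^~ x).
  by move=> a b /(congr1 prefix); rewrite !prefix_splice.
rewrite -(card_imset _ splice_inj); apply: subset_leq_card.
apply/subsetP => _ /imsetP[a aS ->]; rewrite inE splice_in_cycles //=.
by apply/forall_inP => i; rewrite inE => li; rewrite splice_tail.
Qed.

Lemma tail_sum_in_Yset (R : realDomainType) (alpha : R) (N : nat) x :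
  x \in cycles k X -> ~~ bad X alpha N [set i : 'I_k | (l <= i)%N] x ->
  tail_sum x \in Yset l X alpha N.
Proof.
move=> xC; have xX : [forall i in [set i : 'I_k | (l <= i)%N], x i \in X i].
  by move: xC; rewrite inE => /andP[/forallP xX _]; apply/forall_inP => i _.
rewrite /bad xX card_tail_ord (_ : (k - (k - l) - 1 = l - 1)%N); last by lia.
rewrite -ltNge => /ltW; rewrite in_Yset; apply: le_trans.
by rewrite ler_nat card_solutions_le_n_ext.
Qed.

Variables (R : numDomainType) (M : {set {ffun 'I_k -> V}}) (B E : R).
Hypothesis MX : M \subset cycles k X.
Hypothesis point_degree : forall (i : 'I_k) (v : V), v \in X i ->
  #|[set x in cycles k X | x i == v]|%:R <= B.
Hypothesis prefix_degree : forall y, (forall i : 'I_k, (i < l)%N -> y i \in X i) ->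
  #|[set x in M | [forall i : 'I_k, (i < l)%N ==> (x i == y i)]]|%:R <= E.

Lemma card_coord_fibre (i : 'I_l) (v : V) : v \in X i ->
  #|[set x in M | prefix x i == v]|%:R <= B.
Proof.
move=> vX; apply: le_trans (point_degree (i := widen_ord lk i) vX).
rewrite ler_nat; apply/subset_leq_card/subsetP => x.
rewrite inE ffunE => /andP[xM xv]; by rewrite inE xv (subsetP MX).
Qed.

Lemma card_prefix_fibre a : [forall i, a i \in X i] ->
  #|[set x in M | prefix x == a]|%:R <= E.
Proof.
move=> /forallP aX; apply: le_trans (prefix_degree (y := splice a 0) _); last first.
  by move=> i il; rewrite splice_head; apply: aX.
rewrite ler_nat; apply/subset_leq_card/subsetP => x.
rewrite !inE => /andP[-> /eqP <-] /=.
by apply/forallP => i; apply/implyP => il; rewrite splice_prefix.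
Qed.

Lemma card_tail_fibre (v : V) :
  #|[set x in M | tail_sum x == v]|%:R <= #|solutions l X (- v)|%:R * E.
Proof.
rewrite mulr_natl -[X in _ <= X]sumr_const.
apply: (card_le_sum_fibre_bounds (rel := fun x a => prefix x == a)).
  move=> x; rewrite inE => /andP[/(subsetP MX) /prefix_in_solutions xS /eqP xv].
  by exists (prefix x); rewrite -?xv.
move=> a; rewrite inE => /andP[aX _]; apply: le_trans (card_prefix_fibre aX).
by rewrite ler_nat; apply/subset_leq_card/subsetP => x; rewrite !inE => /andP[/andP[-> _] ->].
Qed.

Lemma card_share_contract (z : {ffun 'I_l.+1 -> V}) :
  (forall i : 'I_l, z (widen_ord (leqnSn l) i) \in X i) ->
  #|[set x in M | share_coord (contract x) z]|%:R <=
    l%:R * B + #|solutions l X (- z ord_max)|%:R * E.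
Proof.
move=> zX; pose c (j : 'I_l.+1) :=
  if (j < l)%N then B else #|solutions l X (- z ord_max)|%:R * E.
have -> : l%:R * B + #|solutions l X (- z ord_max)|%:R * E = \sum_(j in [set: 'I_l.+1]) c j.
  rewrite (eq_bigl xpredT) => [|j]; last by rewrite inE.
  rewrite big_ord_recr /= /c ltnn; under eq_bigr => i _ do rewrite /= ltn_ord.
  by rewrite sumr_const card_ord mulr_natl.
apply: (card_le_sum_fibre_bounds (rel := fun x j => contract x j == z j)).
  by move=> x; rewrite inE => /andP[_ /existsP[j xz]]; exists j; rewrite ?inE.
move=> j _; rewrite /c; case: ltnP => [jl | lj].
  have -> : j = widen_ord (leqnSn l) (Ordinal jl) by apply: val_inj.
  apply: le_trans (card_coord_fibre (zX (Ordinal jl))); rewrite ler_nat.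
  apply/subset_leq_card/subsetP => x; rewrite !inE contract_widen.
  by case/andP=> /andP[-> _].
have -> : j = ord_max by apply: val_inj; apply/eqP; rewrite eqn_leq lj -ltnS ltn_ord.
apply: le_trans (card_tail_fibre _); rewrite ler_nat.
apply/subset_leq_card/subsetP => x; rewrite !inE contract_max.
by case/andP=> /andP[-> _].
Qed.

End Contraction.

Theorem claim3p4 (R : rcfType) (p n k l : nat) (X : nat -> {set 'rV['F_p]_n})
    (delta' theta alpha r : R) (M : {set {ffun 'I_k -> 'rV['F_p]_n}})
    (T : {set {ffun 'I_l.+1 -> 'rV['F_p]_n}}) :
  prime p -> (1 <= n)%N -> (4 <= k)%N ->
  let N := (p ^ n)%N in
  0 < delta' ->
  (#|cycles k X|%:R = delta' * (N%:R) ^+ (k - 1)) ->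
  1 <= theta ->
  (forall (i : 'I_k) (v : 'rV['F_p]_n), v \in X (nat_of_ord i) ->
     #|[set x in cycles k X | x i == v]|%:R <= theta * delta' * (N%:R) ^+ (k - 2)) ->
  0 < alpha -> alpha ^+ (k - 2) = theta * delta' ->
  (2 <= l)%N -> (l <= k - 2)%N ->
  0 < r -> r < 1 ->
  M \subset cycles k X ->
  r * delta' * (N%:R) ^+ (k - 1) <= #|M|%:R ->
  (forall y : {ffun 'I_k -> 'rV['F_p]_n},
     (forall i : 'I_k, (i < l)%N -> y i \in X (nat_of_ord i)) ->
     #|[set x in M | [forall i : 'I_k, (i < l)%N ==> (x i == y i)]]|%:R
       <= 2 * alpha ^+ (k - l - 1) * (N%:R) ^+ (k - l - 1)) ->
  (forall x, x \in M -> ~~ bad X alpha N [set i : 'I_k | (l <= i)%N] x) ->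
  maximal_disjoint (cycles l.+1 (famXY l X (Yset l X alpha N))) T ->
  r / (2 * k%:R * theta) * N%:R <= #|T|%:R.
Proof.
move=> p_prime _ k_ge4 N delta_gt0 _ theta_ge1 point_degree alpha_gt0 alpha_def
  l_ge2 l_le _ _ MX card_M prefix_degree not_bad maxT.
have lk : (l <= k)%N by lia.
have split_exp : (k - 2 = (l - 1) + (k - l - 1))%N by lia.
have k1_eq : (k - 1 = (k - 2).+1)%N by lia.
have l4_le : (l + 4 <= 2 * k)%N by lia.
have k_gt0 : (0 < k)%N by lia.
have N_gt0 : 0 < N%:R :> R by rewrite ltr0n expn_gt0 prime_gt0.
have theta_gt0 : 0 < theta by exact: lt_le_trans ltr01 theta_ge1.
pose B := theta * delta' * N%:R ^+ (k - 2).
have share_fibre_le z : z \in T ->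
    #|[set x in M | share_coord (contract lk x) z]|%:R <= (l%:R + 4) * B.
  have [TC _ _] := maxT; move=> /(subsetP TC)/famXY_cycle_coords[zX].
  rewrite in_Yset => zY.
  apply: le_trans (card_share_contract lk MX point_degree prefix_degree zX) _.
  rewrite [leRHS]mulrDl lerD2l /B -alpha_def split_exp.
  exact: ler_mul_pow_bounds (ltW alpha_gt0) (ler0n _ _) zY.
have card_M_le : #|M|%:R <= #|T|%:R * ((l%:R + 4) * B).
  rewrite mulr_natl -[leRHS]sumr_const; apply: card_le_sum_fibre_bounds share_fibre_le => x xM.
  have xC := subsetP MX x xM; apply: maximal_disjoint_share maxT _.
  by apply: (contract_in_cycles lk xC); apply: tail_sum_in_Yset (not_bad x xM).
have D_gt0 : 0 < delta' * N%:R ^+ (k - 2) by rewrite mulr_gt0 // exprn_gt0.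
rewrite mulrAC ler_pdivrMr ?mulr_gt0 ?ltr0n // -(ler_pM2r D_gt0).
have -> : r * N%:R * (delta' * N%:R ^+ (k - 2)) = r * delta' * N%:R ^+ (k - 1).
  by rewrite k1_eq exprS; ring.
apply: le_trans card_M (le_trans card_M_le _); rewrite -[leRHS]mulrA ler_wpM2l //.
have -> : 2 * k%:R * theta * (delta' * N%:R ^+ (k - 2)) = 2 * k%:R * B by rewrite /B; ring.
rewrite ler_wpM2r ?mulr_ge0 ?exprn_ge0 ?(ltW theta_gt0) ?(ltW delta_gt0) //.
by rewrite -(natrD R l 4) -(natrM R 2 k) ler_nat.
Qed.
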